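(* Let $q\ge2$, $n\ge2$, $m=n-1$ and $R\in[m]$. Then $$\min_{{\boldsymbol y}\in\Sigma_{q,R}^m}\mathsf{H}^{\mathsf{In}}_{1\text{-}\mathsf{Del}}({\boldsymbol y})=\log_2(nq)-\frac{(m-R+2)\log_2(m-R+2)+2(R-1)}{nq},$$ and the minimum is attained only by skewed channel outputs.
   Context: $\Sigma_q=\{0,\dots,q-1\}$. For sequences ${\boldsymbol x}$ of length $N$ and ${\boldsymbol y}$ of length $\ell\le N$, $\omega_{{\boldsymbol y}}({\boldsymbol x})$ is the number of index tuples $1\le i_1<\dots<i_\ell\le N$ with $x_{i_j}=y_j$. The $1$-deletion channel with input length $n$ maps ${\boldsymbol x}\in\Sigma_q^n$ to ${\boldsymbol y}\in\Sigma_q^{n-1}$ with probability $\omega_{{\boldsymbol y}}({\boldsymbol x})/n$; under uniform transmission ($X$ uniform on $\Sigma_q^n$), $\mathsf{H}^{\mathsf{In}}_{1\text{-}\mathsf{Del}}({\boldsymbol y})=H(X\mid Y={\boldsymbol y})$ in bits, with posterior $P({\boldsymbol x}\mid {\boldsymbol y})=\Pr\{{\boldsymbol y}\mid{\boldsymbol x}\}/\sum_{{\boldsymbol x}'}\Pr\{{\boldsymbol y}\mid{\boldsymbol x}'\}$. A run is a maximal block of identical consecutive symbols; $\Sigma_{q,R}^m$ is the set of sequences in $\Sigma_q^m$ with exactly $R$ runs. A sequence in $\Sigma_{q,R}^m$ is skewed if it has $R-1$ runs of length one and one run of length $m-(R-1)$. *)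

From mathcomp Require Import all_boot all_order all_algebra.
From mathcomp Require Import reals exp.
Set Implicit Arguments. Unset Strict Implicit. Unset Printing Implicit Defensive.
Import Order.TTheory GRing.Theory Num.Theory.
Local Open Scope ring_scope.

(* Alphabet Sigma_q = 'I_q ; sequences of length N are N.-tuple 'I_q. *)

(* omega_y(x): number of index tuples i_1<...<i_l with x_{i_j} = y_j,
   i.e. number of selection masks b (of length size x) with mask b x = y. *)
Definition omega {T : eqType} (N : nat) (y : seq T) (x : N.-tuple T) : nat :=
  #|[set b : N.-tuple bool | mask b x == y]|.

Definition del1_pr {R : realType} {q : nat} (n : nat)
    (y : seq 'I_q) (x : n.-tuple 'I_q) : R :=
  (omega y x)%:R / n%:R.

Definition posterior {R : realType} {q : nat} (n : nat)
    (y : seq 'I_q) (x : n.-tuple 'I_q) : R :=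
  del1_pr y x / \sum_(x' : n.-tuple 'I_q) del1_pr y x'.

Definition log2 {R : realType} (x : R) : R := ln x / ln 2.

Definition HIn1Del {R : realType} (q n : nat) (y : seq 'I_q) : R :=
  - \sum_(x : n.-tuple 'I_q)
      (let p := @posterior R q n y x in if p == 0 then 0 else p * log2 p).

Fixpoint rl_aux {T : eqType} (a : T) (k : nat) (s : seq T) : seq nat :=
  match s with
  | [::] => [:: k]
  | b :: s' => if b == a then rl_aux a k.+1 s' else k :: rl_aux b 1 s'
  end.

Definition runlengths {T : eqType} (s : seq T) : seq nat :=
  match s with [::] => [::] | a :: s' => rl_aux a 1 s' end.

Definition nruns {T : eqType} (s : seq T) : nat := size (runlengths s).

Definition skewed {T : eqType} (m R : nat) (s : seq T) : bool :=
  perm_eq (runlengths s) ((m - (R - 1))%N :: nseq (R - 1) 1%N).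
Arguments HIn1Del {R} q n y.

(* Under uniform input the posterior of x given y is omega_y(x) / (n q):
   summing omega_y(x) over all x counts the ways to insert one symbol into y,
   i.e. n q.  An input x embeds y more than once only if it lengthens a run of
   y, of length r say, and then it embeds y exactly r + 1 times.  Hence
   H(y) = log2 (n q) - (sum over the runs of (r + 1) log2 (r + 1)) / (n q),
   and minimizing H over the outputs with R runs of total length m amounts to
   maximizing sum_r f (r + 1) for f x = x log2 x.  Strict convexity of f makes
   t |-> f (t + 2) - f 2 strictly superadditive, so the maximum is reached
   exactly when the whole excess m - R sits in a single run. *)

From mathcomp Require Import all_boot all_order all_algebra.
From mathcomp Require Import reals exp.
From mathcomp Require Import zify ring lra.
Import Order.TTheory GRing.Theory Num.Theory.
Set Implicit Arguments. Unset Strict Implicit. Unset Printing Implicit Defensive.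

Section TupleBig.
Variables (T : finType) (V : Type) (idx : V) (op : Monoid.com_law idx).

Lemma big_tuple0 (F : 0.-tuple T -> V) : \big[op/idx]_(t : 0.-tuple T) F t = F [tuple].
Proof. by rewrite (big_pred1 [tuple]) // => t; rewrite [t]tuple0 /= eqxx. Qed.

Lemma big_tuple_cons N (F : N.+1.-tuple T -> V) :
  \big[op/idx]_(t : N.+1.-tuple T) F t =
  \big[op/idx]_(c : T) \big[op/idx]_(t : N.-tuple T) F [tuple of c :: t].
Proof.
rewrite pair_big (reindex (fun p : T * N.-tuple T => [tuple of p.1 :: p.2])) //=.
exists (fun t : N.+1.-tuple T => (thead t, [tuple of behead t])).
  by move=> [c t] _; congr pair; apply: val_inj.
by move=> t _; apply: val_inj; rewrite /= [in RHS](tuple_eta t).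
Qed.

End TupleBig.

Section Embeddings.
Variable T : eqType.

Fixpoint nembed (y x : seq T) : nat :=
  match x with
  | [::] => y == [::]
  | c :: x' => nembed y x' + (if y is a :: y' then (c == a) * nembed y' x' else 0)
  end.

Lemma omega_nembed N (y : seq T) (x : N.-tuple T) : omega y x = nembed y x.
Proof.
rewrite /omega cardsE -sum1_card big_mkcond /=.
elim: N y x => [|N IH] y x; first by rewrite big_tuple0 [x]tuple0 /= eq_sym.
case: x => -[|c x] // sz_x; pose xt := Tuple (sz_x : size x == N).
rewrite big_tuple_cons big_bool /= -(IH y xt) addnC; congr (_ + _).
case: y => [|a y] /=; first by rewrite big1.
rewrite -(IH y xt) big_distrr; apply: eq_bigr => b _ /=.
by rewrite -!topredE /=; case: eqP; rewrite ?mul1n ?mul0n.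
Qed.

Lemma nembed_small y x : size x < size y -> nembed y x = 0.
Proof. by elim: x y => [|c x IH] [|a y] //= lt_xy; rewrite !IH ?muln0 // ltnW. Qed.

Lemma nembed_eqsize y x : size x = size y -> nembed y x = (x == y).
Proof.
elim: x y => [|c x IH] [|a y] //= [sz_xy].
by rewrite nembed_small ?sz_xy // IH // eqseq_cons; case: (_ == a); case: (_ == y).
Qed.

Lemma nembed_cons_self a y : nembed y (a :: y) = (find (predC1 a) y).+1.
Proof.
elim: y a => [|b y IH] a //.
have -> : nembed (b :: y) (a :: b :: y) =
          nembed (b :: y) (b :: y) + (a == b) * nembed y (b :: y) by [].
rewrite nembed_eqsize // eqxx IH /= eq_sym.
by case: eqP => [->|_]; rewrite ?mul1n ?mul0n.
Qed.

End Embeddings.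

Section Runs.
Variable T : eqType.
Implicit Types (a b : T) (s : seq T).

Lemma rl_auxE a k s :
  rl_aux a k s = (k + find (predC1 a) s) :: runlengths (drop (find (predC1 a) s) s).
Proof.
elim: s a k => [|b s IH] a k /=; first by rewrite addn0.
by case: eqP => _ /=; rewrite ?IH ?addSnnS ?addn0.
Qed.

Lemma runlengths_cons a s :
  runlengths (a :: s) = (find (predC1 a) s).+1 :: runlengths (drop (find (predC1 a) s) s).
Proof. exact: rl_auxE. Qed.

Lemma sumn_rl_aux a k s : sumn (rl_aux a k s) = k + size s.
Proof.
elim: s a k => [|b s IH] a k /=; first by rewrite !addn0.
by case: (b == a); rewrite /= IH; lia.
Qed.

Lemma sumn_runlengths s : sumn (runlengths s) = size s.
Proof. by case: s => //= a s; rewrite sumn_rl_aux. Qed.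

Lemma rl_aux_gt0 a k s : 0 < k -> all (fun r => 0 < r) (rl_aux a k s).
Proof.
elim: s a k => [|b s IH] a k k_gt0 /=; first by rewrite k_gt0.
by case: (b == a); rewrite /= ?IH ?k_gt0.
Qed.

Lemma runlengths_gt0 s : all (fun r => 0 < r) (runlengths s).
Proof. by case: s => //= a s; rewrite rl_aux_gt0. Qed.

Fixpoint zigzag a b k : seq T := if k is k'.+1 then a :: zigzag b a k' else [::].

Lemma size_zigzag a b k : size (zigzag a b k) = k.
Proof. by elim: k a b => //= k IH a b; rewrite IH. Qed.

Lemma find_zigzag a b k : a != b -> find (predC1 b) (zigzag a b k) = 0.
Proof. by case: k => //= k ->. Qed.

Lemma runlengths_zigzag a b k : a != b -> runlengths (zigzag a b k) = nseq k 1.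
Proof.
elim: k a b => //= k IH a b neq_ab.
by rewrite rl_auxE find_zigzag 1?eq_sym // drop0 IH // eq_sym.
Qed.

Lemma runlengths_skewed a b k j : a != b ->
  runlengths (nseq k.+1 a ++ zigzag b a j) = k.+1 :: nseq j 1.
Proof.
move=> neq_ab; have neq_ba : b != a by rewrite eq_sym.
rewrite /= rl_auxE find_cat has_nseq /= eqxx /= size_nseq.
by rewrite andbF find_zigzag // addn0 add1n drop_size_cat ?size_nseq // runlengths_zigzag.
Qed.

End Runs.

Section SumOverSupersequences.
Variable T : finType.
Local Open Scope ring_scope.

Lemma sum_nembed_nil (V : nmodType) (g : nat -> V) :
  \sum_(x : 1.-tuple T) g (nembed [::] x) = g 1%N *+ #|T|.
Proof.
by rewrite big_tuple_cons -sumr_const; apply: eq_bigr => c _; rewrite big_tuple0.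
Qed.

Section ZeroAtZero.
Variables (V : zmodType) (g : nat -> V).
Hypothesis g0 : g 0%N = 0.

Lemma sum_eq_tuple N (y : N.-tuple T) : \sum_(x : N.-tuple T) g (x == y :> seq T) = g 1%N.
Proof.
rewrite (bigD1 y) //= eqxx big1 ?addr0 // => x neq_xy.
by rewrite val_eqE (negbTE neq_xy).
Qed.

(* Write x = c :: t.  For c != a only t = a :: y embeds a :: y; for c = a the
   embeddings are those of y into t, plus one more when t = a :: y. *)
Lemma sum_nembed_cons a y :
  let k := find (predC1 a) y in
  \sum_(x : (size y).+2.-tuple T) g (nembed (a :: y) x) =
  g 1%N *+ #|T|.-1 + \sum_(x : (size y).+1.-tuple T) g (nembed y x) - g k.+1 + g k.+2.
Proof.
move=> k; pose ay := in_tuple (a :: y).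
have nembed_ay (t : (size y).+1.-tuple T) : nembed (a :: y) t = (t == ay :> seq T).
  by rewrite nembed_eqsize // size_tuple.
rewrite big_tuple_cons (bigD1 a) //= addrC -!addrA; congr (_ + _).
  rewrite -(cardC1 a) -sumr_const; apply: eq_bigr => c /negbTE neq_ca.
  rewrite -(sum_eq_tuple ay); apply: eq_bigr => t _.
  by rewrite /= nembed_ay neq_ca mul0n addn0.
have nembed_y_ay : nembed y ay = k.+1 := nembed_cons_self a y.
clearbody ay; rewrite eqxx (bigD1 ay) // [in RHS](bigD1 ay) //= mul1n.
rewrite nembed_ay eqxx nembed_y_ay addrACA subrr add0r addrC; congr (_ + _).
by apply: eq_bigr => t neq_t; rewrite mul1n nembed_ay val_eqE (negbTE neq_t).
Qed.

Lemma sum_nembed_runlengths : g 1%N = 0 -> forall y : seq T,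
  \sum_(x : (size y).+1.-tuple T) g (nembed y x) = \sum_(r <- runlengths y) g r.+1.
Proof.
move=> g1; elim=> [|a y IH]; first by rewrite sum_nembed_nil g1 mul0rn big_nil.
rewrite sum_nembed_cons g1 mul0rn add0r IH runlengths_cons big_cons.
case: y IH => [|b y] IH; first by rewrite big_nil /= g1 subr0 add0r addr0.
rewrite [find _ (b :: y)]/=; case: eqP => [->|_] /=.
  by rewrite rl_auxE add1n big_cons [g _ + _]addrC addrK addrC.
by rewrite g1 subr0 addrC.
Qed.

End ZeroAtZero.

Lemma sum_nembed (y : seq T) :
  (\sum_(x : (size y).+1.-tuple T) nembed y x = #|T| * (size y).+1)%N.
Proof.
apply/eqP; rewrite -(eqr_nat int) natr_sum; apply/eqP.
elim: y => [|a y IH]; first by rewrite sum_nembed_nil muln1.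
have T_gt0 : (0 < #|T|)%N by apply/card_gt0P; exists a.
rewrite sum_nembed_cons // IH -[_.+2]addn1 natrD addrA subrK -!natrD.
by congr _%:R; change (size (a :: y)) with (size y).+1; lia.
Qed.

End SumOverSupersequences.

Section Entropy.
Variable R : realType.
Local Open Scope ring_scope.

Definition xlog2 (x : R) : R := x * log2 x.

Definition plog2 (p : R) : R := if p == 0 then 0 else p * log2 p.

Lemma xlog2_0 : xlog2 0 = 0. Proof. by rewrite /xlog2 mul0r. Qed.

Lemma xlog2_1 : xlog2 1 = 0. Proof. by rewrite /xlog2 /log2 ln1 mul0r mulr0. Qed.

Lemma plog2_ratio (w W : nat) : (0 < W)%N ->
  plog2 (w%:R / W%:R) = xlog2 w%:R / W%:R - log2 W%:R * (w%:R / W%:R).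
Proof.
move=> W_gt0; rewrite /plog2 /xlog2; have [->|w_gt0] := posnP w.
  by rewrite !mul0r eqxx mulr0 subr0.
rewrite mulf_eq0 invr_eq0 !pnatr_eq0 !eqn0Ngt w_gt0 W_gt0 /= /log2.
rewrite ln_div ?posrE ?ltr0n //; ring.
Qed.

Lemma entropy_of_weights (I : finType) (w : I -> nat) (W : nat) :
  (\sum_i w i)%N = W -> (0 < W)%N ->
  - \sum_i plog2 ((w i)%:R / W%:R) = log2 W%:R - (\sum_i xlog2 (w i)%:R) / W%:R.
Proof.
move=> sum_w W_gt0; under eq_bigr do rewrite plog2_ratio //.
rewrite sumrB -mulr_suml -mulr_sumr -mulr_suml -natr_sum sum_w.
by rewrite mulfV ?pnatr_eq0 -?lt0n // mulr1 opprB.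
Qed.

Lemma posterior_nembed q (y : seq 'I_q) (x : (size y).+1.-tuple 'I_q) : (0 < q)%N ->
  @posterior R q (size y).+1 y x = (nembed y x)%:R / ((size y).+1 * q)%:R.
Proof.
move=> q_gt0; rewrite /posterior /del1_pr -mulr_suml -natr_sum.
under eq_bigr do rewrite omega_nembed.
rewrite omega_nembed sum_nembed card_ord mulnC !natrM.
by field; rewrite nat1r !pnatr_eq0 -lt0n q_gt0.
Qed.

Lemma HIn1Del_runlengths q n (y : seq 'I_q) : (0 < q)%N -> n = (size y).+1 ->
  HIn1Del q n y =
  log2 (n * q)%:R - (\sum_(r <- runlengths y) xlog2 r.+1%:R) / (n * q)%:R :> R.
Proof.
move=> q_gt0 ->; rewrite -[HIn1Del _ _ _]/(- \sum_x plog2 (posterior y x)).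
under eq_bigr do rewrite posterior_nembed //.
rewrite entropy_of_weights ?sum_nembed ?card_ord 1?mulnC ?muln_gt0 ?q_gt0 //.
by rewrite (sum_nembed_runlengths (g := fun k => xlog2 k%:R)) ?xlog2_0 ?xlog2_1.
Qed.

End Entropy.

Section Convexity.
Variable R : realType.
Local Open Scope ring_scope.
Implicit Types x y : R.

Lemma ln_lt_subr1 x : 0 < x -> x != 1 -> ln x < x - 1.
Proof.
move=> x_gt0 x_neq1; rewrite ltrBrDl -[x in _ < x](lnK x_gt0).
by apply: expR_gt1Dx; rewrite ln_eq0.
Qed.

Lemma ln_sub_lt x y : 0 < x -> x < y -> ln y - ln x < (y - x) / x.
Proof.
move=> x_gt0 lt_xy; have y_gt0 := lt_trans x_gt0 lt_xy.
rewrite -ln_div ?posrE // mulrBl divff ?gt_eqF //.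
by apply: ln_lt_subr1; rewrite ?divr_gt0 // gt_eqF // ltr_pdivlMr // mul1r.
Qed.

Lemma ln_sub_gt x y : 0 < x -> x < y -> (y - x) / y < ln y - ln x.
Proof.
move=> x_gt0 lt_xy; have y_gt0 := lt_trans x_gt0 lt_xy.
have : ln (x / y) < x / y - 1.
  by apply: ln_lt_subr1; rewrite ?divr_gt0 // lt_eqF // ltr_pdivrMr // mul1r.
by rewrite ln_div ?posrE // mulrBl divff ?gt_eqF //; lra.
Qed.

Lemma xlog2_2 : xlog2 2%:R = 2 :> R.
Proof. by rewrite /xlog2 /log2 divff ?mulr1 // gt_eqF // ln_gt0 // ltr1n. Qed.

Lemma xlog2_increment_lt k :
  xlog2 k.+1%:R - xlog2 k%:R < xlog2 k.+2%:R - xlog2 k.+1%:R :> R.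
Proof.
have ln2_gt0 : 0 < ln (2 : R) by rewrite ln_gt0 // ltr1n.
set a := ln (k%:R : R); set b := ln (k.+1%:R : R); set c := ln (k.+2%:R : R).
have lower : 1 < k.+2%:R * (c - b).
  have := @ln_sub_gt k.+1%:R k.+2%:R; rewrite !ltr_nat ltr0n => /(_ isT (ltnSn _)).
  by rewrite -ltr_pdivrMl ?ltr0n // mulr1 -natrB // subSnn mul1r.
have upper : k%:R * (b - a) < 1.
  (* for k = 0, [a] is the junk value [ln 0], cancelled by the factor k *)
  have [->|k_gt0] := posnP k; first by rewrite mul0r ltr01.
  have := @ln_sub_lt k%:R k.+1%:R; rewrite ltr_nat ltr0n => /(_ k_gt0 (ltnSn _)).
  by rewrite -ltr_pdivlMl ?ltr0n // mulr1 -natrB // subSnn mul1r.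
rewrite -subr_gt0 /xlog2 /log2 -/a -/b -/c; move: ln2_gt0; set L := ln _ => L_gt0.
rewrite (_ : _ - _ = (k.+2%:R * (c - b) - k%:R * (b - a)) / L).
  by rewrite divr_gt0 // subr_gt0 (lt_trans upper lower).
by rewrite -!natr1; field; rewrite gt_eqF.
Qed.

Definition xlog2_excess (t : nat) : R := xlog2 t.+2%:R - 2.

Lemma xlog2_excess_superadditive a b : (0 < a)%N -> (0 < b)%N ->
  xlog2_excess a + xlog2_excess b < xlog2_excess (a + b).
Proof.
move=> a_gt0 b_gt0; pose d k : R := xlog2 k.+1%:R - xlog2 k%:R.
have d_lt : {homo d : i j / (i < j)%N >-> i < j}.
  exact: Order.NatMonotonyTheory.homo_ltn_lt xlog2_increment_lt.
have telescope u v : (u <= v)%N -> xlog2 v%:R - xlog2 u%:R = \sum_(u <= k < v) d k.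
  by move=> le_uv; rewrite telescope_sumr.
suff : xlog2 b.+2%:R - xlog2 2%:R < xlog2 (a + b).+2%:R - xlog2 a.+2%:R :> R.
  by rewrite /xlog2_excess xlog2_2; lra.
rewrite (_ : (a + b).+2 = b.+2 + a)%N; last by lia.
rewrite !telescope //; last by lia.
rewrite -[a.+2]/(2 + a)%N big_addn addnK ltr_sum_nat // => k _.
by apply: d_lt; lia.
Qed.

End Convexity.

Section Superadditive.
Local Open Scope ring_scope.
Variables (R : realDomainType) (h : nat -> R).
Hypothesis h0 : h 0%N = 0.
Hypothesis h_superadditive :
  forall a b, (0 < a)%N -> (0 < b)%N -> h a + h b < h (a + b).

Lemma superadditive_le a b : h a + h b <= h (a + b).
Proof.
have [->|a_gt0] := posnP a; first by rewrite h0 add0r.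
have [->|b_gt0] := posnP b; first by rewrite h0 addr0 addn0.
exact/ltW/h_superadditive.
Qed.

Lemma sum_superadditive_le (s : seq nat) : \sum_(t <- s) h t <= h (sumn s).
Proof.
elim: s => [|t s IH]; first by rewrite big_nil h0.
by rewrite big_cons (le_trans _ (superadditive_le t (sumn s))) // lerD2l.
Qed.

Lemma sum_superadditive_eq (s : seq nat) :
  \sum_(t <- s) h t = h (sumn s) -> (count (fun t => 0 < t) s <= 1)%N.
Proof.
elim: s => // t s IH; rewrite big_cons /= => sum_eq.
have le_s := sum_superadditive_le s.
have [t0|t_gt0] := posnP t.
  by rewrite add0n IH //; move: sum_eq; rewrite t0 h0 add0r add0n.
have [/eqP/natnseq0P -> | s_gt0] := posnP (sumn s); first by rewrite count_nseq.
by have := h_superadditive t_gt0 s_gt0; lra.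
Qed.

End Superadditive.

Section SkewedRunlengths.
Implicit Type s : seq nat.

Lemma size_le_sumn s : all (fun r => 0 < r) s -> size s <= sumn s.
Proof. by elim: s => //= r s IH /andP[r_gt0 /IH]; lia. Qed.

Lemma sumn_predn s : all (fun r => 0 < r) s -> sumn [seq r.-1 | r <- s] = sumn s - size s.
Proof.
elim: s => //= r s IH /andP[r_gt0 s_gt0]; rewrite IH //.
by have := size_le_sumn s_gt0; lia.
Qed.

Lemma eq_nseq1 s : all (fun r => 0 < r) s -> count (fun r => 1 < r) s = 0 -> s = nseq (size s) 1.
Proof.
elim: s => //= r s IH /andP[r_gt0 s_gt0]; case: ltnP => // r_le1 /= /(IH s_gt0) def_s.
by rewrite def_s size_nseq; congr (_ :: _); lia.
Qed.

Lemma perm_eq_skewed s : s != [::] -> all (fun r => 0 < r) s ->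
  count (fun r => 1 < r) s <= 1 ->
  perm_eq s ((sumn s - (size s).-1) :: nseq (size s).-1 1).
Proof.
elim: s => // r s IH _ /= /andP[r_gt0 s_gt0].
case: s IH s_gt0 => [|r' s] IH s_gt0; first by rewrite /= addn0 subn0 addn0.
have [r_gt1|r_le1] := ltnP 1 r.
  rewrite add1n ltnS leqn0 => /eqP /(eq_nseq1 s_gt0) def_t.
  by rewrite {2}def_t sumn_nseq mul1n addnK -def_t.
rewrite (_ : r = 1) /=; last by lia.
move=> /(IH isT s_gt0) perm_t; have /= le_size_sum := size_le_sumn s_gt0.
rewrite -(perm_cons 1) in perm_t; apply: perm_trans perm_t _ => /=.
rewrite (_ : 1 + _ - _ = r' + sumn s - size s); last by lia.
by apply/permPl; exact: (perm_catCA [:: 1] [:: _]).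
Qed.

End SkewedRunlengths.

Section RunlengthBound.
Variable R : realType.
Local Open Scope ring_scope.
Implicit Type s : seq nat.

Definition skewed_bound (M K : nat) : R := xlog2 (M - K + 2)%:R + 2 * (K - 1)%:R.

Lemma xlog2_excess0 : xlog2_excess R 0 = 0.
Proof. by rewrite /xlog2_excess xlog2_2 subrr. Qed.

Lemma sum_xlog2_excess s : all (fun r => 0 < r)%N s ->
  \sum_(r <- s) xlog2 r.+1%:R =
  \sum_(t <- [seq r.-1 | r <- s]) xlog2_excess R t + 2 * (size s)%:R.
Proof.
elim: s => [|r s IH] /=; first by rewrite !big_nil mulr0 addr0.
case/andP=> r_gt0 /IH s_sum; rewrite !big_cons s_sum /xlog2_excess prednK // -natr1.
lra.
Qed.

Lemma skewed_boundE s : (0 < size s)%N -> all (fun r => 0 < r)%N s ->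
  skewed_bound (sumn s) (size s) =
  xlog2_excess R (sumn [seq r.-1 | r <- s]) + 2 * (size s)%:R.
Proof.
move=> s_ne0 s_gt0; rewrite sumn_predn //.
rewrite /skewed_bound /xlog2_excess addn2 -(prednK s_ne0) subn1 /= -natr1; lra.
Qed.

Lemma sum_xlog2_le_skewed_bound s : (0 < size s)%N -> all (fun r => 0 < r)%N s ->
  \sum_(r <- s) xlog2 r.+1%:R <= skewed_bound (sumn s) (size s).
Proof.
move=> s_ne0 s_gt0; rewrite sum_xlog2_excess // skewed_boundE // lerD2r.
exact: sum_superadditive_le (@xlog2_excess0) (@xlog2_excess_superadditive R) _.
Qed.

Lemma sum_xlog2_eq_skewed_bound s : (0 < size s)%N -> all (fun r => 0 < r)%N s ->
  \sum_(r <- s) xlog2 r.+1%:R = skewed_bound (sumn s) (size s) ->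
  perm_eq s ((sumn s - (size s).-1)%N :: nseq (size s).-1 1%N).
Proof.
move=> s_ne0 s_gt0; rewrite sum_xlog2_excess // skewed_boundE // => /addIr.
move/(sum_superadditive_eq (@xlog2_excess0) (@xlog2_excess_superadditive R)).
rewrite count_map (eq_count (a2 := fun r => 1 < r)%N) => [|r]; last exact: ltn_predRL.
by apply: perm_eq_skewed; rewrite // -size_eq0 -lt0n.
Qed.

Lemma sum_xlog2_skewed k j :
  \sum_(r <- k.+1 :: nseq j 1%N) xlog2 r.+1%:R = skewed_bound (k + j).+1 j.+1.
Proof.
rewrite big_cons big_nseq /skewed_bound subSS addnK addn2 subn1 /=.
by rewrite iter_addr_0 xlog2_2 mulr_natr.
Qed.

End RunlengthBound.

Local Open Scope ring_scope.

Theorem lemma8 (R : realType) (q n Rr : nat) :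
  (2 <= q)%N -> (2 <= n)%N -> (1 <= Rr)%N -> (Rr <= n.-1)%N ->
  let m := n.-1 in
  let Hmin : R :=
    log2 ((n * q)%:R) -
    (((m - Rr + 2)%N)%:R * log2 (((m - Rr + 2)%N)%:R) + 2 * (Rr - 1)%:R)
      / (n * q)%:R in
  [/\ exists y : m.-tuple 'I_q, nruns y = Rr /\ @HIn1Del R q n y = Hmin,
      forall y : m.-tuple 'I_q, nruns y = Rr -> Hmin <= @HIn1Del R q n y
    & forall y : m.-tuple 'I_q, nruns y = Rr -> @HIn1Del R q n y = Hmin ->
        skewed m Rr y].
Proof.
move=> q_ge2 n_ge2 Rr_gt0 Rr_le_m m Hmin.
have q_gt0 : (0 < q)%N by lia.
have N_gt0 : 0 < (n * q)%:R :> R by rewrite ltr0n muln_gt0; lia.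
have HIn_runs (y : m.-tuple 'I_q) : HIn1Del q n y =
    log2 (n * q)%:R - (\sum_(r <- runlengths y) xlog2 r.+1%:R) / (n * q)%:R.
  by apply: HIn1Del_runlengths; rewrite // size_tuple /m; lia.
have -> : Hmin = log2 (n * q)%:R - skewed_bound R m Rr / (n * q)%:R by [].
have runs_shape (y : m.-tuple 'I_q) : nruns y = Rr ->
    sumn (runlengths y) = m /\ size (runlengths y) = Rr.
  by rewrite sumn_runlengths size_tuple.
split.
- pose a : 'I_q := Ordinal q_gt0; pose b : 'I_q := Ordinal q_ge2.
  have size_y : size (nseq (m - Rr).+1 a ++ zigzag b a (Rr - 1)) == m.
    by rewrite size_cat size_nseq size_zigzag; apply/eqP; lia.
  have runs_y : runlengths (Tuple size_y) = (m - Rr).+1 :: nseq (Rr - 1) 1%N.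
    exact: runlengths_skewed.
  exists (Tuple size_y); rewrite /nruns HIn_runs runs_y /= size_nseq sum_xlog2_skewed.
  by split; [lia | rewrite (_ : (m - Rr + (Rr - 1)).+1 = m)%N ?subn1 ?prednK //; lia].
- move=> y /runs_shape [sum_y size_y].
  rewrite HIn_runs lerD2l lerN2 ler_pM2r ?invr_gt0 //.
  have := @sum_xlog2_le_skewed_bound R (runlengths y).
  by rewrite sum_y size_y runlengths_gt0; apply.
- move=> y /runs_shape [sum_y size_y].
  rewrite HIn_runs => /addrI /oppr_inj /(mulIf (invr_neq0 (lt0r_neq0 N_gt0))).
  have := @sum_xlog2_eq_skewed_bound R (runlengths y).
  by rewrite /skewed sum_y size_y subn1 runlengths_gt0; apply.
Qed.
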